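(* Let $X=(X,a)$ be a $\mathbb T$-category and $\psi\in\hat X$. Then $\psi$, regarded as a $\mathbb T$-module $X\to E$, is a right adjoint $\mathbb T$-module if and only if $\psi$ belongs to the L-closure of $y(X)$ in $\hat X$.
   Context: Let $\mathsf V=(\mathsf V,\otimes,k)$ be a commutative unital quantale (complete lattice, commutative associative $\otimes$ with neutral $k$, $u\otimes(-)$ preserving suprema), internal hom $z\le u\multimap v\iff z\otimes u\le v$. A $\mathsf V$-relation $r$ from $X$ to $Y$ is a map $X\times Y\to\mathsf V$; composition $(s\cdot r)(x,z)=\bigvee_y r(x,y)\otimes s(y,z)$, converse $r^\circ(y,x)=r(x,y)$, pointwise order; a map $f$ is the relation $f(x,y)=k$ if $f(x)=y$, $\bot$ otherwise. Let $\mathbb T=(T,e,m)$ be a Set-monad with $T1=1$, $T$ sending pullbacks to weak pullbacks and each naturality square of $m$ a weak pullback, and $\xi:T\mathsf V\to\mathsf V$ with $\xi e_{\mathsf V}=1$, $\xi\cdot T\xi=\xi\cdot m_{\mathsf V}$, $\xi\cdot T(\otimes)=\otimes\cdot\langle\xi T\pi_1,\xi T\pi_2\rangle$, $\xi\cdot Tk=k$, and such that $\varphi\mapsto\xi\cdot T\varphi$, $\mathsf V^X\to\mathsf V^{TX}$, is natural w.r.t. the monotone maps $P_{\mathsf V}f(\varphi)(y)=\bigvee_{f(x)=y}\varphi(x)$ (a strict topological theory). For a relation $r$ from $X$ to $Y$ let $T_\xi r(\mathfrak x,\mathfrak y)=\bigvee\{\xi(Tr(\mathfrak w))\mid\mathfrak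 w\in T(X\times Y),T\pi_1\mathfrak w=\mathfrak x,T\pi_2\mathfrak w=\mathfrak y\}$. A $\mathbb T$-relation from $X$ to $Y$ is a $\mathsf V$-relation from $TX$ to $Y$; Kleisli composition $b\circ a=b\cdot T_\xi a\cdot m_X^\circ$. A $\mathbb T$-category $(X,a)$ has $k\le a(e_X(x),x)$ and $a\circ a\le a$; a $\mathbb T$-functor $f:(X,a)\to(Y,b)$ satisfies $a(\mathfrak x,x)\le b(Tf(\mathfrak x),f(x))$; subsets carry the induced structure. $E=(1,k)$. A $\mathbb T$-module $\varphi:(X,a)\to(Y,b)$ is a $\mathbb T$-relation with $\varphi\circ a\le\varphi$ and $b\circ\varphi\le\varphi$. A module $\psi:X\to E$ is right adjoint if there is a module $\varphi:E\to X$ with $k\le\psi\circ\varphi$ and $\varphi\circ\psi\le a$. For points of $(Y,b)$, $u\cong v$ means $k\le b(e_Y(u),v)$ and $k\le b(e_Y(v),u)$; the L-closure of $M\subseteq Y$ is $\overline M=\{u\mid$ for all $\mathbb T$-functors $f,g:Y\to Z$ with $f|_M=g|_M$, $f(u)\cong g(u)\}$. $\mathsf V$ is a $\mathbb T$-category with $\hom_\xi(\mathfrak v,v)=\xi(\mathfrak v)\multimap v$; $|X|=(TX,m_X)$; $|X|\multimap\mathsf V$ is the set of $\mathbb T$-functors $|X|\to\mathsf V$ with structure $[m_X,\hom_\xi](\mathfrak p,h)=\bigwedge\{\xi(T\mathrm{ev}(\mathfrak q))\multimap h(m_X(T\pi_1\mathfrak q))\mid\mathfrak q\in T(TX\times(|X|\multimap\mathsf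 V)),T\pi_2\mathfrak q=\mathfrak p\}$, $\mathrm{ev}(\mathfrak x,\varphi)=\varphi(\mathfrak x)$. With $r(\mathfrak x,\mathfrak y)=\bigvee_{m_X(\mathfrak X)=\mathfrak x}T_\xi a(\mathfrak X,\mathfrak y)$, $X^{\mathrm{op}}=(TX,c)$ with $c(\mathfrak X,\mathfrak y)=T_\xi(r^\circ)(\mathfrak X,e_{TX}(\mathfrak y))$. $\hat X\subseteq|X|\multimap\mathsf V$ consists of those $\psi$ which are also $\mathbb T$-functors $X^{\mathrm{op}}\to\mathsf V$, with induced structure; each $\psi\in\hat X$ is a $\mathbb T$-module $X\to E$ via $\psi(\mathfrak x,\star)=\psi(\mathfrak x)$. The Yoneda functor is $y:X\to\hat X$, $y(x)(\mathfrak x)=a(\mathfrak x,x)$. *)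

From Stdlib Require Import ClassicalEpsilon.

Record Quantale := {
  qcar : Type;
  qle : qcar -> qcar -> Prop;
  qsup : (qcar -> Prop) -> qcar;
  qtens : qcar -> qcar -> qcar;
  qunit : qcar;
  qle_refl : forall u, qle u u;
  qle_trans : forall u v w, qle u v -> qle v w -> qle u w;
  qle_antisym : forall u v, qle u v -> qle v u -> u = v;
  qsup_ub : forall (S : qcar -> Prop) u, S u -> qle u (qsup S);
  qsup_least : forall (S : qcar -> Prop) w, (forall u, S u -> qle u w) -> qle (qsup S) w;
  qtens_assoc : forall u v w, qtens u (qtens v w) = qtens (qtens u v) w;
  qtens_comm : forall u v, qtens u v = qtens v u;
  qtens_unit : forall u, qtens qunit u = u;
  qtens_sup : forall u (S : qcar -> Prop),
      qtens u (qsup S) = qsup (fun w => exists v, S v /\ w = qtens u v)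
}.

Record SetMonad := {
  mT : Type -> Type;
  mmap : forall A B : Type, (A -> B) -> mT A -> mT B;
  meta : forall A : Type, A -> mT A;
  mmu : forall A : Type, mT (mT A) -> mT A;
  mmap_id : forall A (x : mT A), mmap A A (fun a => a) x = x;
  mmap_comp : forall A B C (f : A -> B) (g : B -> C) (x : mT A),
      mmap A C (fun a => g (f a)) x = mmap B C g (mmap A B f x);
  meta_nat : forall A B (f : A -> B) (a : A), mmap A B f (meta A a) = meta B (f a);
  mmu_nat : forall A B (f : A -> B) (X : mT (mT A)),
      mmap A B f (mmu A X) = mmu B (mmap (mT A) (mT B) (mmap A B f) X);
  mmu_eta : forall A (x : mT A), mmu A (meta (mT A) x) = x;
  mmu_map_eta : forall A (x : mT A), mmu A (mmap A (mT A) (meta A) x) = x;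
  mmu_assoc : forall A (X : mT (mT (mT A))),
      mmu A (mmu (mT A) X) = mmu A (mmap (mT (mT A)) (mT A) (mmu A) X)
}.

Arguments mmap s {A B} _ _.
Arguments meta s {A} _.
Arguments mmu s {A} _.
Set Implicit Arguments.

Record TopTheory := {
  thM : SetMonad;
  thV : Quantale;
  xi : mT thM (qcar thV) -> qcar thV;
  (* T1 = 1 *)
  th_T1 : forall u v : mT thM unit, u = v;
  (* T sends (the canonical) pullbacks to weak pullbacks *)
  th_wpb : forall A B C (f : A -> C) (g : B -> C) (x : mT thM A) (y : mT thM B),
      mmap thM f x = mmap thM g y ->
      exists w : mT thM {p : A * B | f (fst p) = g (snd p)},
        mmap thM (fun p => fst (proj1_sig p)) w = x /\
        mmap thM (fun p => snd (proj1_sig p)) w = y;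
  (* naturality squares of m are weak pullbacks *)
  th_mu_wpb : forall A B (f : A -> B) (XX : mT thM (mT thM B)) (x : mT thM A),
      mmu thM XX = mmap thM f x ->
      exists W : mT thM (mT thM A),
        mmu thM W = x /\ mmap thM (mmap thM f) W = XX;
  xi_eta : forall v, xi (meta thM v) = v;
  xi_mu : forall W, xi (mmap thM xi W) = xi (mmu thM W);
  xi_tens : forall w : mT thM (qcar thV * qcar thV),
      xi (mmap thM (fun p => qtens thV (fst p) (snd p)) w)
      = qtens thV (xi (mmap thM fst w)) (xi (mmap thM snd w));
  xi_k : xi (mmap thM (fun _ : unit => qunit thV) (meta thM tt)) = qunit thV;
  (* phi |-> xi . T phi is natural w.r.t. the maps P_V f *)
  xi_nat : forall A B (f : A -> B) (phi : A -> qcar thV) (y : mT thM B),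
      xi (mmap thM (fun b => qsup thV (fun v => exists a, f a = b /\ v = phi a)) y)
      = qsup thV (fun v => exists x, mmap thM f x = y /\ v = xi (mmap thM phi x))
}.


Section Defs.
Variable Th : TopTheory.
Local Notation M := (thM Th).
Local Notation T := (mT (thM Th)).
Local Notation V := (qcar (thV Th)).
Local Notation le := (qle (thV Th)).
Local Notation sup := (qsup (thV Th)).
Local Notation tens := (qtens (thV Th)).
Local Notation k := (qunit (thV Th)).
Local Notation Tm := (mmap (thM Th)).
Local Notation e := (meta (thM Th)).
Local Notation m := (mmu (thM Th)).

Definition vbot : V := sup (fun _ => False).
(* internal hom:  z <= u -o v  iff  z (x) u <= v *)
Definition vhom (u v : V) : V := sup (fun z => le (tens z u) v).
Definition vinf (S : V -> Prop) : V := sup (fun z => forall u, S u -> le z u).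

Definition Vrel (X Y : Type) := X -> Y -> V.
Definition rcomp X Y Z (s : Vrel Y Z) (r : Vrel X Y) : Vrel X Z :=
  fun x z => sup (fun v => exists y, v = tens (r x y) (s y z)).
Definition rconv X Y (r : Vrel X Y) : Vrel Y X := fun y x => r x y.
Definition rmap X Y (f : X -> Y) : Vrel X Y :=
  fun x y => if excluded_middle_informative (f x = y) then k else vbot.
Definition rle X Y (r s : Vrel X Y) : Prop := forall x y, le (r x y) (s x y).

Definition Txi X Y (r : Vrel X Y) : Vrel (T X) (T Y) :=
  fun xx yy => sup (fun v => exists w : T (X * Y),
    Tm fst w = xx /\ Tm snd w = yy /\ v = xi Th (Tm (fun p => r (fst p) (snd p)) w)).

Definition TRel X Y := Vrel (T X) Y.
Definition kcomp X Y Z (b : TRel Y Z) (a : TRel X Y) : TRel X Z :=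
  rcomp b (rcomp (Txi a) (rconv (rmap (@mmu M X)))).

Definition isTcat X (a : TRel X X) : Prop :=
  (forall x, le k (a (e x) x)) /\ rle (kcomp a a) a.
Definition isTfun X Y (a : TRel X X) (b : TRel Y Y) (f : X -> Y) : Prop :=
  forall xx x, le (a xx x) (b (Tm f xx) (f x)).

Definition Estr : TRel unit unit := fun _ _ => k.

Definition isModule X Y (a : TRel X X) (b : TRel Y Y) (phi : TRel X Y) : Prop :=
  rle (kcomp phi a) phi /\ rle (kcomp b phi) phi.

Definition right_adjoint X (a : TRel X X) (psi : TRel X unit) : Prop :=
  exists phi : TRel unit X,
    isModule Estr a phi /\ rle (fun _ _ => k) (kcomp psi phi) /\ rle (kcomp phi psi) a.

Definition tiso Y (b : TRel Y Y) (u v : Y) : Prop :=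
  le k (b (e u) v) /\ le k (b (e v) u).
Definition Lclosure Y (b : TRel Y Y) (Msub : Y -> Prop) (u : Y) : Prop :=
  forall (Z : Type) (c : TRel Z Z), isTcat c ->
  forall f g : Y -> Z, isTfun b c f -> isTfun b c g ->
    (forall y, Msub y -> f y = g y) -> tiso c (f u) (g u).

(** V as a T-category, |X|, and |X| -o V *)
Definition hom_xi : TRel V V := fun vv v => vhom (xi Th vv) v.
Definition absX X : TRel (T X) (T X) := rmap (@mmu M X).
Definition Vfun X := {h : T X -> V | isTfun (absX X) hom_xi h}.
Definition homstruct X : TRel (Vfun X) (Vfun X) :=
  fun pp h => vinf (fun v => exists qq : T (T X * Vfun X),
    Tm snd qq = pp /\
    v = vhom (xi Th (Tm (fun p => proj1_sig (snd p) (fst p)) qq))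
             (proj1_sig h (m (Tm fst qq)))).

Definition opstruct X (a : TRel X X) : TRel (T X) (T X) :=
  let r : Vrel (T X) (T X) :=
    fun xx yy => sup (fun v => exists XX, m XX = xx /\ v = Txi a XX yy) in
  fun XX yy => Txi (rconv r) XX (e yy).

Definition hatX X (a : TRel X X) :=
  {psi : Vfun X | isTfun (opstruct a) hom_xi (proj1_sig psi)}.
Definition hatstruct X (a : TRel X X) : TRel (hatX a) (hatX a) :=
  fun pp h => homstruct (Tm (@proj1_sig _ _) pp) (proj1_sig h).
Definition hatval X (a : TRel X X) (psi : hatX a) : T X -> V :=
  proj1_sig (proj1_sig psi).

Definition yoneda_image X (a : TRel X X) (psi : hatX a) : Prop :=
  exists x, hatval psi = fun xx => a xx x.

End Defs.

(* Let φ : E → X be a left adjoint of ψ, so k ≤ ψ ∘ φ and φ ∘ ψ ≤ a. The counit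
   gives φ(x) ≤ \hat a(e ψ, y x) and ψ being a module gives
   ψ(𝔵) ≤ \hat a(T y 𝔵, ψ). For T-functors f, g agreeing on y(X), pushing the
   first through f and the second through g and composing in Z turns the unit
   into k ≤ c(e (f ψ), g ψ); hence ψ lies in the L-closure of y(X).
   Conversely, take as left adjoint
   φ(x) = ⋀_𝔛 ξ(Tψ 𝔛) ⊸ a(m 𝔛, x), which is a module with φ ∘ ψ ≤ a by
   construction. The T-functors F σ = ⋁_𝔵 ξ(Tφ 𝔵) ⊗ σ(𝔵) and
   G σ = ⋀_𝔛 ξ(Tψ 𝔛) ⊸ σ(m 𝔛) from \hat X to V agree on representables, so
   L-closure gives G ψ ≤ F ψ. Since ψ is a T-functor on |X|, k ≤ G ψ, and
   F ψ ≤ ψ ∘ φ yields the unit. *)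
From Stdlib Require Import ClassicalEpsilon FunctionalExtensionality.

Set Implicit Arguments.
Unset Strict Implicit.

Section QuantaleFacts.
Context {Q : Quantale}.
Local Notation le := (qle Q).
Local Notation sup := (qsup Q).
Local Notation tens := (qtens Q).

Lemma qle_sup (S : qcar Q -> Prop) u v : S u -> le v u -> le v (sup S).
Proof. intros Su vu. eapply qle_trans; [exact vu | apply qsup_ub; exact Su]. Qed.

Lemma qtens_monor w u v : le u v -> le (tens w u) (tens w v).
Proof.
  intros uv.
  assert (sup_uv : sup (fun z => z = u \/ z = v) = v).
  { apply qle_antisym.
    - apply qsup_least. intros z [-> | ->]; [exact uv | apply qle_refl].
    - apply qle_sup with v; [right; reflexivity | apply qle_refl]. }
  rewrite <- sup_uv, qtens_sup. apply qle_sup with (tens w u).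
  - exists u. split; [left |]; reflexivity.
  - apply qle_refl.
Qed.

Lemma qtens_monol w u v : le u v -> le (tens u w) (tens v w).
Proof. intros uv. rewrite (qtens_comm _ u), (qtens_comm _ v). now apply qtens_monor. Qed.

Lemma qtens_mono u u' v v' : le u u' -> le v v' -> le (tens u v) (tens u' v').
Proof.
  intros. eapply qle_trans; [apply qtens_monol | apply qtens_monor]; eassumption.
Qed.

Lemma qtens_sup_le u (S : qcar Q -> Prop) w :
  (forall v, S v -> le (tens u v) w) -> le (tens u (sup S)) w.
Proof. intros H. rewrite qtens_sup. apply qsup_least. intros z [v [Sv ->]]. auto. Qed.

Lemma qsup_tens_le u (S : qcar Q -> Prop) w :
  (forall v, S v -> le (tens v u) w) -> le (tens (sup S) u) w.
Proof.
  intros H. rewrite qtens_comm. apply qtens_sup_le.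
  intros v Sv. rewrite qtens_comm. auto.
Qed.

Lemma qtens_unitr u : tens u (qunit Q) = u.
Proof. rewrite qtens_comm. apply qtens_unit. Qed.

End QuantaleFacts.

Section TopTheoryFacts.
Variable Th : TopTheory.
Local Notation M := (thM Th).
Local Notation T := (mT (thM Th)).
Local Notation V := (qcar (thV Th)).
Local Notation le := (qle (thV Th)).
Local Notation sup := (qsup (thV Th)).
Local Notation tens := (qtens (thV Th)).
Local Notation k := (qunit (thV Th)).
Local Notation Tm := (mmap (thM Th)).
Local Notation e := (meta (thM Th)).
Local Notation m := (mmu (thM Th)).
Local Notation xi := (xi Th).

Lemma vbot_le u : le (vbot Th) u.
Proof. apply qsup_least. intros _ []. Qed.

Lemma qtens_vbot u : tens u (vbot Th) = vbot Th.
Proof. apply qle_antisym; [apply qtens_sup_le; intros _ [] | apply vbot_le]. Qed.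

Lemma vhom_intro z u v : le (tens z u) v -> le z (vhom Th u v).
Proof. intros H. apply qle_sup with z; [exact H | apply qle_refl]. Qed.

Lemma vhom_elim z u v : le z (vhom Th u v) -> le (tens z u) v.
Proof.
  intros H. eapply qle_trans; [apply qtens_monol; exact H |].
  apply qsup_tens_le. auto.
Qed.

Lemma vinf_lb (S : V -> Prop) u : S u -> le (vinf Th S) u.
Proof. intros Su. apply qsup_least. auto. Qed.

Lemma vinf_glb (S : V -> Prop) z : (forall u, S u -> le z u) -> le z (vinf Th S).
Proof. intros H. apply qle_sup with z; [exact H | apply qle_refl]. Qed.

Lemma Tmap_comp A B C (f : A -> B) (g : B -> C) x :
  Tm g (Tm f x) = Tm (fun a => g (f a)) x.
Proof. symmetry. apply mmap_comp. Qed.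

Lemma Tmap_ext A B (f g : A -> B) x : (forall a, f a = g a) -> Tm f x = Tm g x.
Proof. intros fg. now rewrite (functional_extensionality f g fg). Qed.

(* Constant maps factor through T1 = 1. *)
Lemma Tmap_const A B (c : B) (x : T A) : Tm (fun _ => c) x = e c.
Proof.
  transitivity (Tm (fun _ : unit => c) (Tm (fun _ => tt) x)).
  - now rewrite Tmap_comp.
  - rewrite (th_T1 Th (Tm (fun _ => tt) x) (e tt)). apply meta_nat.
Qed.

Lemma Tmap_snd_eta A B C (h : A * B -> C) (w : T (A * B)) b :
  Tm snd w = e b -> Tm h w = Tm (fun a => h (a, b)) (Tm fst w).
Proof.
  intros Hw.
  assert (Hw' : Tm snd w = Tm (fun _ : unit => b) (e tt)) by now rewrite meta_nat.
  destruct (th_wpb Th snd (fun _ : unit => b) w (e tt) Hw') as [W [<- _]].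
  rewrite !Tmap_comp. apply Tmap_ext.
  intros [[[a b'] u] Hp]. simpl in *. now subst.
Qed.

Lemma Tpair_exists A B (x : T A) (y : T B) :
  exists w : T (A * B), Tm fst w = x /\ Tm snd w = y.
Proof.
  assert (H : Tm (fun _ => tt) x = Tm (fun _ => tt) y) by apply th_T1.
  destruct (th_wpb Th _ _ x y H) as [W [H1 H2]].
  exists (Tm (@proj1_sig _ _) W). now rewrite !Tmap_comp.
Qed.

Lemma xi_const A (c : V) (z : T A) : xi (Tm (fun _ => c) z) = c.
Proof. rewrite Tmap_const. apply xi_eta. Qed.

Lemma xi_tens_fun A (h1 h2 : A -> V) z :
  xi (Tm (fun t => tens (h1 t) (h2 t)) z) = tens (xi (Tm h1 z)) (xi (Tm h2 z)).
Proof.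
  pose proof (xi_tens Th (Tm (fun t => (h1 t, h2 t)) z)) as H.
  now rewrite !Tmap_comp in H.
Qed.

(* Monotonicity of ξ ∘ T(-) comes from naturality w.r.t. P_V applied to the
   codiagonal A + A → A, whose P_V-image of [r, s] is s when r ≤ s. *)
Lemma xi_mono A (r s : A -> V) z :
  (forall t, le (r t) (s t)) -> le (xi (Tm r z)) (xi (Tm s z)).
Proof.
  intros rs.
  pose (f := fun p : A + A => match p with inl a => a | inr a => a end).
  pose (phi := fun p : A + A => match p with inl a => r a | inr a => s a end).
  assert (join_s : (fun b => sup (fun v => exists a, f a = b /\ v = phi a)) = s).
  { apply functional_extensionality. intros b. apply qle_antisym.
    - apply qsup_least. intros v [[a | a] [<- ->]]; [apply rs | apply qle_refl].
    - apply qle_sup with (phi (inr b)); [now exists (inr b) | apply qle_refl]. }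
  rewrite <- join_s. rewrite (xi_nat Th f phi z).
  apply qle_sup with (xi (Tm phi (Tm inl z))).
  - exists (Tm inl z). split; [| reflexivity]. rewrite Tmap_comp. apply mmap_id.
  - rewrite Tmap_comp. apply qle_refl.
Qed.

Lemma Txi_ge A B (r : Vrel Th A B) w :
  le (xi (Tm (fun p => r (fst p) (snd p)) w)) (Txi r (Tm fst w) (Tm snd w)).
Proof. apply qle_sup with (xi (Tm (fun p => r (fst p) (snd p)) w)); [now exists w | apply qle_refl]. Qed.

Lemma Txi_map A B C (r : Vrel Th A B) (g1 : C -> A) (g2 : C -> B) z :
  le (xi (Tm (fun c => r (g1 c) (g2 c)) z)) (Txi r (Tm g1 z) (Tm g2 z)).
Proof.
  pose proof (Txi_ge r (Tm (fun c => (g1 c, g2 c)) z)) as H.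
  now rewrite !Tmap_comp in H.
Qed.

Lemma Txi_le A B (r : Vrel Th A B) xx yy u :
  (forall w, Tm fst w = xx -> Tm snd w = yy ->
     le (xi (Tm (fun p => r (fst p) (snd p)) w)) u) ->
  le (Txi r xx yy) u.
Proof. intros H. apply qsup_least. intros v [w [H1 [H2 ->]]]. auto. Qed.

Lemma Txi_eta A B (r : Vrel Th A B) x y : le (r x y) (Txi r (e x) (e y)).
Proof. pose proof (Txi_ge r (e (x, y))) as H. now rewrite !meta_nat, xi_eta in H. Qed.

Lemma kcomp_ge X Y Z (b : TRel Th Y Z) (a : TRel Th X Y) XX yy z :
  le (tens (Txi a XX yy) (b yy z)) (kcomp b a (m XX) z).
Proof.
  apply qle_sup with (tens (sup (fun v => exists y0,
     v = tens (rconv (rmap Th (@mmu M X)) (m XX) y0) (Txi a y0 yy))) (b yy z)).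
  - now exists yy.
  - apply qtens_monol. apply qle_sup with (tens k (Txi a XX yy)).
    + exists XX. unfold rconv, rmap.
      now destruct (excluded_middle_informative (m XX = m XX)).
    + rewrite qtens_unit. apply qle_refl.
Qed.

Lemma kcomp_le X Y Z (b : TRel Th Y Z) (a : TRel Th X Y) x z u :
  (forall XX yy, m XX = x -> le (tens (Txi a XX yy) (b yy z)) u) ->
  le (kcomp b a x z) u.
Proof.
  intros H. apply qsup_least. intros v [yy ->].
  apply qsup_tens_le. intros v [XX ->]. unfold rconv, rmap.
  destruct (excluded_middle_informative (m XX = x)).
  - rewrite qtens_unit. auto.
  - rewrite (qtens_comm _ (vbot Th)), qtens_vbot, (qtens_comm _ (vbot Th)), qtens_vbot.
    apply vbot_le.
Qed.

Lemma hom_xi_isTcat : isTcat (hom_xi Th).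
Proof.
  split.
  - intros v. unfold hom_xi. rewrite xi_eta. apply vhom_intro.
    rewrite qtens_unit. apply qle_refl.
  - intros x z. apply kcomp_le. intros VV vv <-. unfold hom_xi. apply vhom_intro.
    rewrite <- qtens_assoc, (qtens_comm _ (vhom Th (xi vv) z)), qtens_assoc.
    eapply qle_trans with (tens (xi vv) (vhom Th (xi vv) z)).
    + apply qtens_monol. apply qsup_tens_le. intros u [w [H1 [H2 ->]]].
      rewrite <- xi_mu, <- H1, <- H2, !Tmap_comp, <- xi_tens_fun. apply xi_mono.
      intros p. apply vhom_elim, qle_refl.
    + rewrite qtens_comm. apply vhom_elim, qle_refl.
Qed.

Section Tcategory.
Variable X : Type.
Variable a : TRel Th X X.
Hypothesis a_Tcat : isTcat a.

Lemma Tcat_trans XX yy x : le (tens (Txi a XX yy) (a yy x)) (a (m XX) x).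
Proof. destruct a_Tcat as [_ a_trans]. eapply qle_trans; [apply kcomp_ge | apply a_trans]. Qed.

Lemma Tcat_refl x : le k (a (e x) x).
Proof. apply a_Tcat. Qed.

Lemma yoneda_isTfun_abs x : isTfun (absX Th X) (hom_xi Th) (fun xx => a xx x).
Proof.
  intros XX y. unfold absX, rmap, hom_xi.
  destruct (excluded_middle_informative (m XX = y)) as [<- | _]; [| apply vbot_le].
  apply vhom_intro. rewrite qtens_unit.
  eapply qle_trans; [| apply (Tcat_trans XX (e x) x)].
  rewrite <- (qtens_unitr (xi (Tm (fun xx => a xx x) XX))).
  apply qtens_mono; [| apply Tcat_refl].
  pose proof (Txi_map a (fun t => t) (fun _ => x) XX) as H.
  now rewrite mmap_id, Tmap_const in H.
Qed.

Lemma yoneda_isTfun_op x : isTfun (opstruct a) (hom_xi Th) (fun xx => a xx x).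
Proof.
  intros XX yy. unfold opstruct, hom_xi. cbv zeta.
  apply Txi_le. intros w H1 H2. apply vhom_intro.
  erewrite Tmap_snd_eta by exact H2. rewrite H1, <- xi_tens_fun.
  eapply qle_trans; [apply xi_mono with (s := fun _ => a yy x) | rewrite xi_const; apply qle_refl].
  intros t. cbn [fst snd]. unfold rconv.
  apply qsup_tens_le. intros v [YY [<- ->]]. apply Tcat_trans.
Qed.

Definition yoneda (x : X) : hatX a :=
  exist _ (exist _ (fun xx => a xx x) (yoneda_isTfun_abs x)) (yoneda_isTfun_op x).

Lemma yoneda_in_image x : yoneda_image (yoneda x).
Proof. now exists x. Qed.

(* Being a T-functor X^op → V makes ψ a left a-module. *)
Lemma hatval_act (psi : hatX a) YY xx :
  le (tens (Txi a YY xx) (hatval psi xx)) (hatval psi (m YY)).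
Proof.
  destruct psi as [[p p_abs] p_op]. unfold hatval; simpl in *.
  apply vhom_elim. specialize (p_op (e xx) (m YY)). unfold hom_xi in p_op.
  rewrite meta_nat, xi_eta in p_op. eapply qle_trans; [| exact p_op].
  eapply qle_trans; [| apply Txi_eta].
  apply qle_sup with (Txi a YY xx); [now exists YY | apply qle_refl].
Qed.

Lemma hatval_le_hatstruct_yoneda (psi : hatX a) xx :
  le (hatval psi xx) (hatstruct (Tm yoneda xx) psi).
Proof.
  unfold hatstruct, homstruct. rewrite Tmap_comp. apply vinf_glb.
  intros u [qq [Hq ->]]. apply vhom_intro.
  destruct (th_wpb Th snd _ qq xx Hq) as [W [<- HW2]].
  rewrite !Tmap_comp. cbn [fst snd].
  erewrite (Tmap_ext (g := fun p => a (fst (fst (proj1_sig p))) (snd (proj1_sig p))))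
    by (intros [[[t h] x] Hp]; simpl in *; now subst h).
  rewrite qtens_comm. eapply qle_trans; [apply qtens_monol, Txi_map |].
  rewrite HW2. apply hatval_act.
Qed.

Section RightAdjoint.
Variable psi : hatX a.
Let psiT : TRel Th X unit := fun xx _ => hatval psi xx.
Variable phi : TRel Th unit X.
Hypothesis unit_psi_phi : rle (fun _ _ => k) (kcomp psiT phi).
Hypothesis counit_psi_phi : rle (kcomp phi psiT) a.

Lemma counit_le_hatstruct_yoneda u x : le (phi u x) (hatstruct (e psi) (yoneda x)).
Proof.
  unfold hatstruct, homstruct. rewrite meta_nat. apply vinf_glb.
  intros v [qq [Hq ->]]. apply vhom_intro. simpl.
  erewrite Tmap_snd_eta by exact Hq. rewrite qtens_comm.
  eapply qle_trans; [| apply counit_psi_phi].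
  eapply qle_trans; [| apply kcomp_ge with (yy := u)].
  apply qtens_monol.
  pose proof (Txi_map psiT (fun t => t) (fun _ => tt) (Tm fst qq)) as H.
  now rewrite mmap_id, (th_T1 Th _ u) in H.
Qed.

Lemma right_adjoint_functors_le Z (c : TRel Th Z Z) (f g : hatX a -> Z) :
  isTcat c -> isTfun (@hatstruct Th X a) c f -> isTfun (@hatstruct Th X a) c g ->
  (forall x, f (yoneda x) = g (yoneda x)) ->
  le k (c (e (f psi)) (g psi)).
Proof.
  intros [_ c_trans] f_fun g_fun fg.
  eapply qle_trans; [apply (unit_psi_phi (e tt) tt) |].
  apply kcomp_le. intros UU xx _.
  assert (phi_collapse : le (Txi phi UU xx) (xi (Tm (phi (e tt)) xx))).
  { apply Txi_le. intros w _ <-. rewrite Tmap_comp.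
    apply xi_mono. intros t. rewrite (th_T1 Th (fst t) (e tt)). apply qle_refl. }
  eapply qle_trans; [apply qtens_monol, phi_collapse |].
  eapply qle_trans; [| apply c_trans].
  rewrite <- (mmu_eta _ _ (e (f psi))).
  eapply qle_trans; [| apply kcomp_ge with (yy := Tm (fun x => f (yoneda x)) xx)].
  apply qtens_mono.
  - pose proof (Txi_map c (fun _ => e (f psi)) (fun x => f (yoneda x)) xx) as H.
    rewrite Tmap_const in H. eapply qle_trans; [| exact H].
    apply xi_mono. intros x.
    eapply qle_trans; [apply (counit_le_hatstruct_yoneda (e tt) x) |].
    pose proof (f_fun (e psi) (yoneda x)) as Hx. now rewrite meta_nat in Hx.
  - rewrite (Tmap_ext xx fg), <- Tmap_comp.
    eapply qle_trans; [apply hatval_le_hatstruct_yoneda | apply g_fun].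
Qed.

End RightAdjoint.

Lemma right_adjoint_Lclosure (psi : hatX a) :
  right_adjoint a (fun xx (_ : unit) => hatval psi xx) ->
  Lclosure (@hatstruct Th X a) (@yoneda_image Th X a) psi.
Proof.
  intros [phi [_ [unit_psi_phi counit_psi_phi]]] Z c c_Tcat f g f_fun g_fun fg.
  split; eapply right_adjoint_functors_le; eauto;
    intros x; [| symmetry]; apply fg, yoneda_in_image.
Qed.

Section LeftAdjoint.
Variable psi : hatX a.
Let psiv := hatval psi.

Definition hom_from_psi (s : T X -> V) : V :=
  vinf Th (fun v => exists XX, v = vhom Th (xi (Tm psiv XX)) (s (m XX))).

Definition psi_ladj (x : X) : V := hom_from_psi (fun xx => a xx x).

Definition ladj_tens_term (p : T X * hatX a) : V :=
  tens (xi (Tm psi_ladj (fst p))) (hatval (snd p) (fst p)).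

Definition ladj_tens (s : hatX a) : V :=
  sup (fun v => exists p, snd p = s /\ v = ladj_tens_term p).

Definition hom_from_psi_hat (s : hatX a) : V := hom_from_psi (hatval s).

Lemma hom_from_psi_counit s XX : le (tens (hom_from_psi s) (xi (Tm psiv XX))) (s (m XX)).
Proof. apply vhom_elim, vinf_lb. now exists XX. Qed.

Lemma hom_from_psi_counit_eta s t : le (tens (psiv t) (hom_from_psi s)) (s t).
Proof.
  rewrite qtens_comm. pose proof (hom_from_psi_counit s (e t)) as H.
  now rewrite meta_nat, xi_eta, mmu_eta in H.
Qed.

Lemma psi_ladj_act xx x : le (tens (xi (Tm psi_ladj xx)) (a xx x)) (psi_ladj x).
Proof.
  apply vinf_glb. intros v [XX ->]. apply vhom_intro.
  eapply qle_trans; [| apply (Tcat_trans XX xx x)].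
  rewrite <- qtens_assoc, (qtens_comm _ (a xx x)), qtens_assoc.
  apply qtens_monol.
  destruct (Tpair_exists XX xx) as [w [<- <-]].
  eapply qle_trans; [| apply Txi_ge].
  rewrite !Tmap_comp, qtens_comm, <- xi_tens_fun.
  apply xi_mono. intros [t x']. apply hom_from_psi_counit_eta.
Qed.

Lemma hatstruct_le_vhom (SS : T (hatX a)) (s : hatX a) (qq : T (T X * Vfun Th X)) :
  Tm snd qq = Tm (@proj1_sig _ _) SS ->
  le (hatstruct SS s)
     (vhom Th (xi (Tm (fun p => proj1_sig (snd p) (fst p)) qq))
              (hatval s (m (Tm fst qq)))).
Proof. intros Hq. apply vinf_lb. now exists qq. Qed.

Lemma hom_from_psi_hat_isTfun : isTfun (@hatstruct Th X a) (hom_xi Th) hom_from_psi_hat.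
Proof.
  intros SS s. unfold hom_xi. apply vhom_intro, vinf_glb. intros v [XX ->].
  apply vhom_intro.
  destruct (Tpair_exists XX SS) as [w [<- <-]].
  pose proof (@hatstruct_le_vhom (Tm snd w) s (Tm (fun p => (fst p, proj1_sig (snd p))) w)) as H.
  rewrite !Tmap_comp in H. specialize (H eq_refl).
  rewrite <- qtens_assoc. eapply qle_trans; [| apply vhom_elim; exact H].
  apply qtens_monor. rewrite qtens_comm, !Tmap_comp, <- xi_tens_fun.
  apply xi_mono. intros [t s']. apply (hom_from_psi_counit_eta (hatval s') t).
Qed.

Lemma ladj_tens_isTfun : isTfun (@hatstruct Th X a) (hom_xi Th) ladj_tens.
Proof.
  intros SS s. unfold hom_xi. apply vhom_intro. unfold ladj_tens.
  rewrite (xi_nat Th snd ladj_tens_term SS). apply qtens_sup_le. intros v [ww [<- ->]].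
  unfold ladj_tens_term at 1. rewrite xi_tens_fun.
  pose proof (@hatstruct_le_vhom (Tm snd ww) s (Tm (fun p => (fst p, proj1_sig (snd p))) ww)) as H.
  rewrite !Tmap_comp in H. specialize (H eq_refl).
  apply qle_sup with (ladj_tens_term (m (Tm fst ww), s)); [now exists (m (Tm fst ww), s) |].
  unfold ladj_tens_term. cbn [fst snd].
  rewrite <- (Tmap_comp fst (fun t => xi (Tm psi_ladj t))), <- (Tmap_comp (Tm psi_ladj) xi),
    xi_mu, mmu_nat.
  rewrite qtens_comm, <- qtens_assoc. apply qtens_monor.
  rewrite qtens_comm. apply vhom_elim. exact H.
Qed.

Lemma ladj_tens_yoneda s : yoneda_image s -> ladj_tens s = hom_from_psi_hat s.
Proof.
  intros [x Hx]. unfold hom_from_psi_hat. rewrite Hx. fold (psi_ladj x).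
  apply qle_antisym.
  - apply qsup_least. intros v [[t s'] [Hs ->]]. cbn [snd] in Hs. subst s'.
    unfold ladj_tens_term. cbn [fst snd]. rewrite Hx. apply psi_ladj_act.
  - apply qle_sup with (ladj_tens_term (e x, s)); [now exists (e x, s) |].
    unfold ladj_tens_term. cbn [fst snd]. rewrite Hx, meta_nat, xi_eta.
    rewrite <- (qtens_unitr (psi_ladj x)) at 1. apply qtens_monor, Tcat_refl.
Qed.

Lemma unit_le_hom_from_psi_hat : le k (hom_from_psi_hat psi).
Proof.
  apply vinf_glb. intros v [XX ->]. apply vhom_intro. rewrite qtens_unit.
  destruct psi as [[p p_abs] p_op]. unfold hatval in *. simpl in *.
  pose proof (p_abs XX (m XX)) as H. unfold absX, rmap, hom_xi in H.
  destruct (excluded_middle_informative (m XX = m XX)) as [_ | n]; [| congruence].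
  apply vhom_elim in H. now rewrite qtens_unit in H.
Qed.

Let ladjT : TRel Th unit X := fun _ x => psi_ladj x.
Let psiT : TRel Th X unit := fun xx _ => psiv xx.

Lemma psi_ladj_isModule : isModule (Estr Th) a ladjT.
Proof.
  unfold ladjT. split; intros u x; apply kcomp_le.
  - intros UU uu _. rewrite <- (qtens_unit _ (psi_ladj x)) at 2. apply qtens_monol.
    apply Txi_le. intros w _ _. unfold Estr. rewrite xi_const. apply qle_refl.
  - intros UU xx _. eapply qle_trans; [| apply (psi_ladj_act xx x)]. apply qtens_monol.
    apply Txi_le. intros w _ <-. rewrite Tmap_comp. apply qle_refl.
Qed.

Lemma psi_ladj_counit : rle (kcomp ladjT psiT) a.
Proof.
  intros xx x. apply kcomp_le. intros XX uu <-.
  rewrite qtens_comm. eapply qle_trans; [| apply (hom_from_psi_counit (fun xx => a xx x) XX)].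
  apply qtens_monor. apply Txi_le. intros w <- _. rewrite Tmap_comp. apply qle_refl.
Qed.

Lemma psi_ladj_unit : le k (ladj_tens psi) -> rle (fun _ _ => k) (kcomp psiT ladjT).
Proof.
  intros k_le u []. eapply qle_trans; [exact k_le |].
  rewrite <- (mmu_eta _ _ u). apply qsup_least.
  intros v [[t s'] [Hs ->]]. cbn [snd] in Hs. subst s'.
  eapply qle_trans; [| apply kcomp_ge with (yy := t)].
  apply qtens_monol.
  pose proof (Txi_map ladjT (fun _ => u) (fun t => t) t) as H.
  now rewrite Tmap_const, mmap_id in H.
Qed.

Lemma Lclosure_right_adjoint :
  Lclosure (@hatstruct Th X a) (@yoneda_image Th X a) psi -> right_adjoint a psiT.
Proof.
  intros psi_Lclosed.
  destruct (psi_Lclosed V (hom_xi Th) hom_xi_isTcat ladj_tens hom_from_psi_hat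
              ladj_tens_isTfun hom_from_psi_hat_isTfun ladj_tens_yoneda) as [_ G_le_F].
  unfold hom_xi in G_le_F. rewrite xi_eta in G_le_F.
  apply vhom_elim in G_le_F. rewrite qtens_unit in G_le_F.
  exists ladjT. split; [apply psi_ladj_isModule |]. split; [| apply psi_ladj_counit].
  apply psi_ladj_unit. eapply qle_trans; [apply unit_le_hom_from_psi_hat | exact G_le_F].
Qed.

End LeftAdjoint.
End Tcategory.
End TopTheoryFacts.

Theorem mainTheorem20 :
  forall (Th : TopTheory) (X : Type) (a : TRel Th X X),
    isTcat a ->
    forall psi : hatX a,
      right_adjoint a (fun xx (_ : unit) => hatval psi xx)
      <-> Lclosure (@hatstruct Th X a) (@yoneda_image Th X a) psi.
Proof.
  intros Th X a a_Tcat psi. split.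
  - apply right_adjoint_Lclosure, a_Tcat.
  - apply Lclosure_right_adjoint, a_Tcat.
Qed.
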